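(* Let $G$ be a connected weighted graph and $d$ a positive integer. Up to isomorphism over $G$, there are finitely many unramified harmonic morphisms $\varphi:G'\to G$ of degree $d$ from connected weighted graphs $G'$.
   Context: A graph $G$ consists of a finite set $X(G)$, an idempotent root map $r:X(G)\to X(G)$ and an involution $\iota:X(G)\to X(G)$ fixing $r(X(G))$ pointwise. $V(G)=r(X(G))$ are the vertices, $H(G)=X(G)\setminus V(G)$ the half-edges; $\iota$-orbits of size 2 in $H(G)$ are edges, fixed points are legs. $T_vG=\{h\in H(G): r(h)=v\}$, $\mathrm{val}(v)=\#T_vG$. A weighted graph has $g:V(G)\to\mathbb{Z}_{\ge0}$; $\chi(v)=2-2g(v)-\mathrm{val}(v)$. A morphism $\varphi:G'\to G$ is a map $X(G')\to X(G)$ commuting with $r$ and $\iota$ sending each edge to an edge or a vertex. It is harmonic if equipped with $d_\varphi:X(G')\to\mathbb{Z}_{\ge0}$ such that $d_\varphi$ agrees on the two halves of an edge, $d_\varphi(h')=0$ iff $\varphi(h')$ is a vertex, and for each $v'\in V(G')$ and each $h\in T_{\varphi(v')}G$, $d_\varphi(v')=\sum_{h'\in T_{v'}G',\varphi(h')=h}d_\varphi(h')$. Its degree is $\sum_{\varphi(v')=v}d_\varphi(v')$ (independent of $v$ for connected $G$). It is finite if $d_\varphi>0$ on all half-edges, and unramified if it is finite and $d_\varphi(v')\chi(\varphi(v'))-\chi(v')=0$ for all $v'\in V(G')$. *)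

From mathcomp Require Import all_boot all_order all_algebra.
Set Implicit Arguments. Unset Strict Implicit. Unset Printing Implicit Defensive.
Import GRing.Theory Num.Theory.

Record graph := Graph {
  X : finType;
  r : X -> X;
  iota : X -> X;
  r_idem : forall x, r (r x) = r x;
  iota_invol : forall x, iota (iota x) = x;
  iota_fix : forall x, iota (r x) = r x }.

Definition is_vertex (G : graph) (x : X G) : bool := r x == x.
Definition is_half (G : graph) (x : X G) : bool := ~~ is_vertex x.
(* h is a half-edge belonging to an edge (iota-orbit of size 2) *)
Definition is_edge_half (G : graph) (x : X G) : bool := is_half x && (iota x != x).

Definition val (G : graph) (v : X G) : nat := #|[pred h | is_half h && (r h == v)]|.

Definition adj (G : graph) : rel (X G) :=
  fun x y => [exists h, is_half h && (r h == x) && (r (iota h) == y)].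
Definition connected (G : graph) : Prop :=
  (exists v : X G, is_vertex v) /\
  forall v w : X G, is_vertex v -> is_vertex w -> connect (@adj G) v w.

(* Weighted graph: genus function (only its values on vertices matter). *)
Record wgraph := WGraph { wg :> graph; genus : X wg -> nat }.

Definition euler_char (G : wgraph) (v : X G) : int :=
  2%:Z - 2%:Z * (genus v)%:Z - (val v)%:Z.

Record hmor (G : wgraph) := HMor {
  src : wgraph;
  phi : X src -> X G;
  dphi : X src -> nat }.
Arguments phi {G} _ _.
Arguments dphi {G} _ _.
Arguments src {G} _.

Definition is_morphism (G : wgraph) (m : hmor G) : Prop :=
  (forall x, phi m (r x) = r (phi m x)) /\
  (forall x, phi m (iota x) = iota (phi m x)) /\
  (forall h, is_edge_half h -> is_vertex (phi m h) || is_edge_half (phi m h)).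

Definition harmonic (G : wgraph) (m : hmor G) : Prop :=
  (forall h, is_edge_half h -> dphi m (iota h) = dphi m h) /\
  (forall h, is_half h -> (dphi m h == 0) = is_vertex (phi m h)) /\
  (forall v', is_vertex v' -> forall h : X G, is_half h -> r h = phi m v' ->
     dphi m v' = \sum_(h' : X (src m) | is_half h' && (r h' == v') && (phi m h' == h))
                    dphi m h').

Definition has_degree (G : wgraph) (m : hmor G) (d : nat) : Prop :=
  forall v : X G, is_vertex v ->
    \sum_(v' : X (src m) | is_vertex v' && (phi m v' == v)) dphi m v' = d.

Definition finite_mor (G : wgraph) (m : hmor G) : Prop :=
  forall h, is_half h -> 0 < dphi m h.

Definition unramified (G : wgraph) (m : hmor G) : Prop :=
  finite_mor m /\
  forall v', is_vertex v' ->
    ((dphi m v')%:Z * euler_char (phi m v') - euler_char v' = 0)%R.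

Definition iso_over (G : wgraph) (m1 m2 : hmor G) : Prop :=
  exists psi : X (src m1) -> X (src m2),
    bijective psi /\
    [/\ forall x, psi (r x) = r (psi x),
        forall x, psi (iota x) = iota (psi x),
        forall v, is_vertex v -> genus (psi v) = genus v,
        forall x, phi m2 (psi x) = phi m1 x &
        forall x, dphi m2 (psi x) = dphi m1 x].

From Pilot Require Import Defs.
From mathcomp Require Import all_boot all_order all_algebra.
From mathcomp Require Import zify.
From Stdlib Require Import Classical.
Set Implicit Arguments. Unset Strict Implicit. Unset Printing Implicit Defensive.

(** All local degrees of an unramified harmonic morphism of degree [d] from a
   connected graph lie between 1 and [d].  So [G'] has at most [d] vertices over
   each vertex of [G] and, by harmonicity, at most [d] half-edges over each
   half-edge of [G] at each of them, while [d(v') chi(phi v') = chi(v')] bounds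
   the genera.  Listing [(r, iota, phi, d_phi, g)] along an enumeration of
   [X G'] therefore gives a list of bounded length of tuples of bounded numbers,
   and two morphisms with the same list are isomorphic over [G]. *)

Lemma is_vertex_r (g : graph) (x : X g) : is_vertex (r x).
Proof. by rewrite /is_vertex r_idem. Qed.

Lemma bounded_seqs_finite (T : eqType) (A : seq T) (n : nat) :
  exists L : seq (seq T), forall s, size s <= n -> {subset s <= A} -> s \in L.
Proof.
elim: n => [|n [L sizeL]]; first by exists [:: [::]] => [[|? ?]].
exists ([::] :: [seq a :: t | a <- A, t <- L]) => [[|a t]] //= size_t at_A.
rewrite inE allpairs_f ?orbT ?at_A ?mem_head ?sizeL // => y y_t.
by rewrite at_A // inE y_t orbT.
Qed.

Lemma image_representatives (E : Type) (C : eqType) (c : E -> C) (L : seq C) :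
  exists s : seq E, forall e, c e \in L -> c e \in map c s.
Proof.
elim: L => [|a L [s sP]]; first by exists [::].
have [[e0 e0_a] | no_a] := classic (exists e0, c e0 = a).
  exists (e0 :: s) => e; rewrite !inE e0_a => /orP [-> // | /sP ->].
  exact: orbT.
exists s => e; rewrite inE => /orP [/eqP e_a | /sP //].
by case: no_a; exists e.
Qed.

(** The genus is bounded only at vertices, so it is recorded only there. *)
Definition code_entry (G : wgraph) (m : hmor G) (x : X (src m)) : seq nat :=
  [:: enum_rank (r x) : nat; enum_rank (Defs.iota x) : nat; enum_rank (phi m x) : nat;
      dphi m x; if is_vertex x then genus x else 0].
Arguments code_entry {G} m x.

Definition code (G : wgraph) (m : hmor G) : seq (seq nat) :=
  map (code_entry m) (enum (X (src m))).

Lemma size_code (G : wgraph) (m : hmor G) : size (code m) = #|X (src m)|.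
Proof. by rewrite size_map cardE. Qed.

Lemma nth_code (G : wgraph) (m : hmor G) (x : X (src m)) :
  nth [::] (code m) (enum_rank x) = code_entry m x.
Proof. by rewrite (nth_map x) ?nth_enum_rank // -cardE ltn_ord. Qed.

Lemma code_iso (G : wgraph) (m1 m2 : hmor G) : code m1 = code m2 -> iso_over m1 m2.
Proof.
move=> code12; have card12 : #|X (src m1)| = #|X (src m2)|.
  by rewrite -!size_code code12.
pose psi x := enum_val (cast_ord card12 (enum_rank x)).
pose psi' y := enum_val (cast_ord (esym card12) (enum_rank y)).
have rank_psi x : enum_rank (psi x) = enum_rank x :> nat by rewrite enum_valK.
have psiE x y : enum_rank x = enum_rank y :> nat -> psi x = y.
  by move=> rank_xy; apply/enum_rank_inj/val_inj; rewrite /= rank_psi.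
have entry x : code_entry m1 x = code_entry m2 (psi x).
  have := congr1 (nth [::] ^~ (enum_rank x)) code12.
  by rewrite nth_code -rank_psi nth_code.
have psi_r x : psi (r x) = r (psi x) by case: (entry x) => /psiE.
exists psi; split.
  by exists psi' => [x | y]; rewrite /psi /psi' enum_valK ?cast_ordK ?cast_ordKV enum_rankK.
split=> [|x|v v_vertex|x|x].
- exact: psi_r.
- by case: (entry x) => _ /psiE.
- have psi_v_vertex : is_vertex (psi v) by rewrite /is_vertex -psi_r (eqP v_vertex).
  by case: (entry v); rewrite v_vertex psi_v_vertex.
- by case: (entry x) => _ _ /val_inj /enum_rank_inj.
- by case: (entry x).
Qed.

Section LocalDegrees.

Variables (G : wgraph) (m : hmor G).
Hypotheses (m_morph : is_morphism m) (m_harm : harmonic m) (m_fin : finite_mor m).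

Lemma is_vertex_phi v : is_vertex v -> is_vertex (phi m v).
Proof. by case: m_morph => phi_r _ /eqP v_root; rewrite /is_vertex -phi_r v_root. Qed.

Lemma is_half_phi h : is_half h -> is_half (phi m h).
Proof. by case: m_harm => _ [dphi0 _] h_half; rewrite /is_half -dphi0 // -lt0n m_fin. Qed.

Lemma dphi_half_le_root h' : is_half h' -> dphi m h' <= dphi m (r h').
Proof.
case: m_morph => phi_r _; case: m_harm => _ [_ balance] h'_half.
rewrite (balance _ (is_vertex_r h') _ (is_half_phi h'_half) (esym (phi_r h'))).
by rewrite (bigD1 h') /= ?h'_half ?eqxx // leq_addr.
Qed.

Lemma sum_dphi_halves_le :
  \sum_(h' : X (src m) | is_half h') dphi m h' <=
  #|X G| * \sum_(v' : X (src m) | is_vertex v') dphi m v'.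
Proof.
case: m_morph => phi_r _; case: m_harm => _ [_ balance].
pose star (v' : X (src m)) (h : X G) := is_half h && (r h == phi m v').
rewrite (partition_big (fun h' => (r h', phi m h'))
   (fun p => is_vertex p.1 && star p.1 p.2)) => [|h' h'_half] /=; last first.
  by rewrite is_vertex_r /star is_half_phi // phi_r eqxx.
rewrite -(pair_big_dep (fun v' => is_vertex v') star
   (fun v' h => \sum_(h' | is_half h' && ((r h', phi m h') == (v', h))) dphi m h')).
rewrite big_distrr /=; apply: leq_sum => v' v'_vertex.
rewrite (eq_bigr (fun _ => dphi m v')) => [|h /andP [h_half /eqP h_root]]; last first.
  by rewrite (balance v' v'_vertex h h_half h_root); apply: eq_bigl => h'; rewrite xpair_eqE andbA.
by rewrite sum_nat_const leq_mul ?max_card.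
Qed.

Variable d : nat.
Hypothesis m_deg : has_degree m d.

Lemma dphi_vertex_le v' : is_vertex v' -> dphi m v' <= d.
Proof.
move=> v'_vertex; rewrite -(m_deg (is_vertex_phi v'_vertex)).
by rewrite (bigD1 v') /= ?v'_vertex ?eqxx // leq_addr.
Qed.

Lemma dphi_le x : dphi m x <= d.
Proof.
have [x_vertex | x_half] := boolP (is_vertex x); first exact: dphi_vertex_le.
exact: leq_trans (dphi_half_le_root x_half) (dphi_vertex_le (is_vertex_r x)).
Qed.

Lemma sum_dphi_vertices_le :
  \sum_(v' : X (src m) | is_vertex v') dphi m v' <= #|X G| * d.
Proof.
rewrite (partition_big (phi m) (fun v => is_vertex v)) => [|v' /is_vertex_phi //].
by rewrite (eq_bigr (fun _ => d)) ?sum_nat_const ?leq_mul2r ?max_card ?orbT.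
Qed.

(** A vertex of local degree 0 carries no half-edge, so by connectedness it would
   be the only vertex of [G'], and the degree would be 0. *)
Lemma dphi_vertex_gt0 : connected (src m) -> 0 < d ->
  forall v', is_vertex v' -> 0 < dphi m v'.
Proof.
move=> [_ m_conn] d_gt0 v' v'_vertex; rewrite lt0n; apply/eqP => dphi_v'.
have bare h' : is_half h' -> r h' != v'.
  move=> h'_half; apply: contraTneq (m_fin h'_half) => h'_root.
  by rewrite -leqNgt -dphi_v' -h'_root dphi_half_le_root.
have only_v' w : is_vertex w -> w = v'.
  move=> w_vertex; have /connectP [[|y p] /= path_p ->] // := m_conn v' w v'_vertex w_vertex.
  case/andP: path_p => /existsP [h /andP [/andP [h_half /eqP h_root] _]] _.
  by move: (bare h h_half); rewrite h_root eqxx.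
move: d_gt0; rewrite -(m_deg (is_vertex_phi v'_vertex)) big1 // => w /andP [w_vertex _].
by rewrite (only_v' w w_vertex).
Qed.

Definition card_bound := #|X G|.+1 * (#|X G| * d).

Lemma card_src_le : connected (src m) -> 0 < d -> #|X (src m)| <= card_bound.
Proof.
move=> m_conn d_gt0; rewrite -sum1_card.
apply: (@leq_trans (\sum_(x : X (src m)) dphi m x)).
  apply: leq_sum => x _; have [x_vertex | x_half] := boolP (is_vertex x).
    exact: dphi_vertex_gt0.
  exact: m_fin.
rewrite (bigID (fun x => is_vertex x)) /= /card_bound mulSn.
apply: leq_add; first exact: sum_dphi_vertices_le.
by apply: leq_trans sum_dphi_halves_le _; rewrite leq_mul2l sum_dphi_vertices_le orbT.
Qed.

Definition genus_bound := 1 + d * (\sum_(v : X G) genus v + #|X G|).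

Lemma genus_le : unramified m -> forall v', is_vertex v' -> @genus (src m) v' <= genus_bound.
Proof.
move=> [_ hurwitz] v' v'_vertex.
have D_le := dphi_vertex_le v'_vertex.
have g0_le : genus (phi m v') <= \sum_(v : X G) genus v by rewrite (bigD1 (phi m v')) //= leq_addr.
have w0_le : Defs.val (phi m v') <= #|X G| := max_card _.
have := hurwitz v' v'_vertex; rewrite /euler_char /genus_bound.
nia.
Qed.

Definition entry_bound := card_bound + #|X G| + d + genus_bound.

Lemma code_entry_le : connected (src m) -> unramified m -> 0 < d ->
  forall x, all (fun k => k <= entry_bound) (code_entry m x).
Proof.
move=> m_conn m_unr d_gt0 x.
have rank_le (T : finType) (y : T) : enum_rank y <= #|T| := ltnW (ltn_ord _).
have card_le : #|X (src m)| <= entry_bound.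
  by apply: leq_trans (card_src_le m_conn d_gt0) _; rewrite /entry_bound; lia.
have G_le : #|X G| <= entry_bound by rewrite /entry_bound; lia.
rewrite /= andbT; apply/and5P; split.
- exact: leq_trans (rank_le _ _) card_le.
- exact: leq_trans (rank_le _ _) card_le.
- exact: leq_trans (rank_le _ _) G_le.
- by apply: leq_trans (dphi_le x) _; rewrite /entry_bound; lia.
- case: ifP => [/(genus_le m_unr) genus_x_le | _] //.
  by apply: leq_trans genus_x_le _; rewrite /entry_bound; lia.
Qed.

End LocalDegrees.

Theorem proposition2p21 (G : wgraph) (d : nat) :
  connected G -> 0 < d ->
  exists (n : nat) (f : 'I_n -> hmor G),
    forall m : hmor G,
      connected (src m) -> is_morphism m -> harmonic m -> unramified m ->
      has_degree m d ->
      exists i : 'I_n, iso_over m (f i).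
Proof.
move=> _ d_gt0.
have [entries entriesP] := bounded_seqs_finite (iota 0 (entry_bound G d).+1) 5.
have [codes codesP] := bounded_seqs_finite entries (card_bound G d).
have [s sP] := image_representatives (@code G) codes.
exists (size s), (fun i => nth (@HMor G G id (fun=> 0)) s i).
move=> m m_conn m_morph m_harm m_unr m_deg.
have [m_fin _] := m_unr.
have code_m : code m \in codes.
  apply: codesP => [|_ /mapP [x _ ->]]; first by rewrite size_code card_src_le.
  have entry_le := code_entry_le m_morph m_harm m_fin m_deg m_conn m_unr d_gt0 x.
  by apply: entriesP => // k /(allP entry_le); rewrite mem_iota ltnS.
have := sP m code_m; rewrite -index_mem size_map => i_lt.
exists (Ordinal i_lt); apply: code_iso.
by rewrite (set_nth_default m) // -(nth_map m (code m)) // nth_index // -index_mem size_map.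
Qed.
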